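(* Let $L$ be a regular locale without isolated points, and let $a,b\in L$ with $a^*=0$ and $b\ne0$. Then there exist $c,d\in L$ with $0\ne c\le b$, $0\ne d\le b$, $c\wedge d=0$, and $a\vee c^*=1=a\vee d^*$.
   Context: A frame (locale) $L$ is a complete lattice in which finite meets distribute over arbitrary joins; $x\to y$ is the Heyting implication and $x^*=x\to0$ the pseudocomplement. $L$ is regular if $x=\bigvee\{y\in L\mid y\prec x\}$ for every $x$, where $y\prec x$ means $y^*\vee x=1$. A sublocale of $L$ is a subset closed under arbitrary meets such that $x\to s$ lies in it whenever $s$ does; the open sublocale of $x$ is $\mathfrak{o}(x)=\{x\to y\mid y\in L\}$. A point of $L$ is $p\ne1$ such that $x\wedge y\le p$ implies $x\le p$ or $y\le p$; it is isolated if the sublocale $\{1,p\}$ equals $\mathfrak{o}(x)$ for some $x\in L$. *)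

Set Implicit Arguments.

Record Frame := {
  carrier :> Type;
  le : carrier -> carrier -> Prop;
  le_refl : forall x, le x x;
  le_trans : forall x y z, le x y -> le y z -> le x z;
  le_antisym : forall x y, le x y -> le y x -> x = y;
  sup : (carrier -> Prop) -> carrier;
  sup_ub : forall (S : carrier -> Prop) x, S x -> le x (sup S);
  sup_least : forall (S : carrier -> Prop) u,
      (forall x, S x -> le x u) -> le (sup S) u;
  meet : carrier -> carrier -> carrier;
  meet_lb1 : forall x y, le (meet x y) x;
  meet_lb2 : forall x y, le (meet x y) y;
  meet_greatest : forall x y z, le z x -> le z y -> le z (meet x y);
  meet_sup_distr : forall x (S : carrier -> Prop),
      meet x (sup S) = sup (fun z => exists s, S s /\ z = meet x s)
}.

Section FrameOps.
Variable L : Frame.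

Definition bot : L := @sup L (fun _ => False).
Definition top : L := @sup L (fun _ => True).
Definition join (x y : L) : L := @sup L (fun z => z = x \/ z = y).
Definition inf (S : L -> Prop) : L := @sup L (fun z => forall s, S s -> @le L z s).
Definition himpl (x y : L) : L := @sup L (fun z => @le L (@meet L z x) y).
Definition pcompl (x : L) : L := himpl x bot.
Definition well_inside (y x : L) : Prop := join (pcompl y) x = top.
Definition regular : Prop :=
  forall x : L, x = @sup L (fun y => well_inside y x).
Definition sublocale (S : L -> Prop) : Prop :=
  (forall T : L -> Prop, (forall t, T t -> S t) -> S (inf T)) /\
  (forall x s, S s -> S (himpl x s)).
Definition open_sublocale (x : L) : L -> Prop := fun z => exists y, z = himpl x y.
Definition is_point (p : L) : Prop :=
  p <> top /\ forall x y, @le L (@meet L x y) p -> @le L x p \/ @le L y p.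
Definition isolated (p : L) : Prop :=
  is_point p /\
  exists x : L, forall z, (z = top \/ z = p) <-> open_sublocale x z.
Definition no_isolated_points : Prop := forall p : L, ~ isolated p.
End FrameOps.

Arguments le {f} _ _.
Arguments sup {f} _.
Arguments meet {f} _ _.
Arguments bot {L}.
Arguments top {L}.
Arguments join {L} _ _.
Arguments inf {L} _.
Arguments himpl {L} _ _.
Arguments pcompl {L} _.
Arguments well_inside {L} _ _.
Arguments is_point {L} _.
Arguments isolated {L} _.

(* Since a is dense, a ∧ b is nonzero, so by regularity some nonzero y is well
   inside a ∧ b; every e ≤ y is then well inside a, i.e. a ∨ e* = 1.  It remains
   to split y into two disjoint nonzero parts.  If that is impossible, regularity
   makes y an atom (y ∧ x = 0 or y ≤ x for every x); then y* is a point and the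
   open sublocale o(y) is {1, y*}, so y* is an isolated point. *)

From Stdlib Require Import Classical.

Section FrameFacts.
Context {L : Frame}.
Implicit Types a b c d e u w x y z : L.

Lemma bot_le x : le bot x.
Proof. apply sup_least. intros _ []. Qed.

Lemma le_top x : le x top.
Proof. apply sup_ub. exact I. Qed.

Lemma le_bot_eq x : le x bot -> x = bot.
Proof. intros H. apply le_antisym; [exact H | apply bot_le]. Qed.

Lemma top_le_eq x : le top x -> x = top.
Proof. intros H. apply le_antisym; [apply le_top | exact H]. Qed.

Lemma join_ub1 x y : le x (join x y).
Proof. apply sup_ub. auto. Qed.

Lemma join_ub2 x y : le y (join x y).
Proof. apply sup_ub. auto. Qed.

Lemma join_least x y z : le x z -> le y z -> le (join x y) z.
Proof. intros Hx Hy. apply sup_least. intros w [-> | ->]; assumption. Qed.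

Lemma join_comm x y : join x y = join y x.
Proof.
  apply le_antisym; apply join_least; (apply join_ub1 || apply join_ub2).
Qed.

Lemma meet_comm x y : meet x y = meet y x.
Proof.
  apply le_antisym; apply meet_greatest; (apply meet_lb1 || apply meet_lb2).
Qed.

Lemma meet_join_le x y z : le (meet z (join x y)) (join (meet z x) (meet z y)).
Proof.
  unfold join at 1. rewrite meet_sup_distr. apply sup_least.
  intros w [s [[-> | ->] ->]]; [apply join_ub1 | apply join_ub2].
Qed.

Lemma himpl_adj x y z : le z (himpl x y) <-> le (meet z x) y.
Proof.
  split; intros H.
  - eapply le_trans; [apply meet_greatest; [apply meet_lb2 | eapply le_trans; [apply meet_lb1 | exact H]]|].
    unfold himpl. rewrite meet_sup_distr. apply sup_least.
    intros w [s [Hs ->]]. rewrite meet_comm. exact Hs.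
  - apply sup_ub. exact H.
Qed.

Lemma pcompl_adj x z : le z (pcompl x) <-> meet z x = bot.
Proof.
  unfold pcompl. rewrite himpl_adj. split; [apply le_bot_eq | intros ->; apply le_refl].
Qed.

Lemma meet_pcompl x : meet x (pcompl x) = bot.
Proof. rewrite meet_comm. apply pcompl_adj, le_refl. Qed.

Lemma pcompl_anti {x y} : le x y -> le (pcompl y) (pcompl x).
Proof.
  intros Hxy. apply pcompl_adj, le_bot_eq. rewrite meet_comm, <- (meet_pcompl y).
  apply meet_greatest; [eapply le_trans; [apply meet_lb1 | exact Hxy] | apply meet_lb2].
Qed.

Lemma le_of_join_top {x y z} : join x y = top -> meet z x = bot -> le z y.
Proof.
  intros Hxy Hzx.
  assert (Hz : le z (meet z (join x y))).
  { apply meet_greatest; [apply le_refl | rewrite Hxy; apply le_top]. }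
  eapply le_trans; [exact Hz|]. eapply le_trans; [apply meet_join_le|].
  rewrite Hzx. apply join_least; [apply bot_le | apply meet_lb2].
Qed.

Lemma well_inside_le {w x} : well_inside w x -> le w x.
Proof. intros H. exact (le_of_join_top H (meet_pcompl w)). Qed.

Lemma well_inside_mono {e y x a} :
  le e y -> well_inside y x -> le x a -> well_inside e a.
Proof.
  unfold well_inside. intros Hey Hyx Hxa. apply top_le_eq. rewrite <- Hyx.
  apply join_least.
  - eapply le_trans; [exact (pcompl_anti Hey) | apply join_ub1].
  - eapply le_trans; [exact Hxa | apply join_ub2].
Qed.

Lemma dense_meet_eq_bot {a b} : pcompl a = bot -> meet a b = bot -> b = bot.
Proof.
  intros Ha Hab. apply le_bot_eq. rewrite <- Ha. apply pcompl_adj.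
  rewrite meet_comm. exact Hab.
Qed.

Lemma himpl_disjoint {x u} : meet x u = bot -> himpl x u = pcompl x.
Proof.
  intros Hxu. apply le_antisym.
  - apply pcompl_adj, le_bot_eq. rewrite <- Hxu.
    apply meet_greatest; [apply meet_lb2 | apply himpl_adj, le_refl].
  - apply himpl_adj. rewrite meet_comm, meet_pcompl. apply bot_le.
Qed.

Lemma himpl_top {x u} : le x u -> himpl x u = top.
Proof.
  intros Hxu. apply top_le_eq, himpl_adj. eapply le_trans; [apply meet_lb2 | exact Hxu].
Qed.

Definition atom y : Prop := y <> bot /\ forall x, meet y x = bot \/ le y x.

Definition splittable y : Prop :=
  exists c d, c <> bot /\ le c y /\ d <> bot /\ le d y /\ meet c d = bot.

Lemma atom_pcompl_point {y} : atom y -> is_point (pcompl y).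
Proof.
  intros [Hy Hdich]. split.
  - intros Htop. apply Hy, le_bot_eq. rewrite <- (meet_pcompl y).
    apply meet_greatest; [apply le_refl | rewrite Htop; apply le_top].
  - intros x x' Hxx'.
    destruct (Hdich x) as [Hx | Hx]; [left; apply pcompl_adj; rewrite meet_comm; exact Hx|].
    destruct (Hdich x') as [Hx' | Hx']; [right; apply pcompl_adj; rewrite meet_comm; exact Hx'|].
    exfalso. apply Hy, le_bot_eq. rewrite <- (meet_pcompl y).
    apply meet_greatest; [apply le_refl|].
    eapply le_trans; [apply meet_greatest; [exact Hx | exact Hx'] | exact Hxx'].
Qed.

Lemma atom_open_sublocale {y} :
  atom y -> forall z, (z = top \/ z = pcompl y) <-> open_sublocale L y z.
Proof.
  intros [_ Hdich] z. split.
  - intros [-> | ->].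
    + exists top. symmetry. apply himpl_top, le_top.
    + exists bot. reflexivity.
  - intros [u ->]. destruct (Hdich u) as [Hyu | Hyu].
    + right. apply himpl_disjoint, Hyu.
    + left. apply himpl_top, Hyu.
Qed.

Lemma atom_pcompl_isolated {y} : atom y -> isolated (pcompl y).
Proof.
  intros Hy. split; [apply atom_pcompl_point, Hy|].
  exists y. apply atom_open_sublocale, Hy.
Qed.

Section Regular.
Hypothesis L_regular : regular L.

Lemma regular_well_inside_neq_bot {x} :
  x <> bot -> exists w, well_inside w x /\ w <> bot.
Proof.
  intros Hx. apply NNPP. intros Hnone. apply Hx, le_bot_eq.
  rewrite (L_regular x). apply sup_least. intros w Hw.
  destruct (classic (w = bot)) as [-> | Hw0]; [apply le_refl|].
  exfalso. apply Hnone. exists w. split; assumption.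
Qed.

Lemma unsplittable_atom {y} : y <> bot -> ~ splittable y -> atom y.
Proof.
  intros Hy Hsplit. split; [exact Hy|]. intros x.
  destruct (classic (meet y x = bot)) as [Hyx | Hyx]; [left; exact Hyx | right].
  destruct (regular_well_inside_neq_bot Hyx) as [w [Hw Hw0]].
  assert (Hwy : le w y) by (eapply le_trans; [apply well_inside_le, Hw | apply meet_lb1]).
  assert (Hrest : meet y (pcompl w) = bot).
  { apply NNPP. intros Hrest. apply Hsplit.
    exists w, (meet y (pcompl w)). repeat split; try assumption.
    - apply meet_lb1.
    - apply le_bot_eq. rewrite <- (meet_pcompl w).
      apply meet_greatest; [apply meet_lb1 | eapply le_trans; [apply meet_lb2 | apply meet_lb2]]. }
  eapply le_trans; [exact (le_of_join_top Hw Hrest) | apply meet_lb2].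
Qed.

Lemma no_isolated_points_splittable {y} :
  no_isolated_points L -> y <> bot -> splittable y.
Proof.
  intros Hni Hy. apply NNPP. intros Hsplit.
  exact (Hni _ (atom_pcompl_isolated (unsplittable_atom Hy Hsplit))).
Qed.

End Regular.
End FrameFacts.

Theorem lemma5p1 (L : Frame) (a b : L) :
  regular L -> no_isolated_points L ->
  pcompl a = bot -> b <> bot ->
  exists c d : L,
    c <> bot /\ le c b /\ d <> bot /\ le d b /\
    meet c d = bot /\
    join a (pcompl c) = top /\ join a (pcompl d) = top.
Proof.
  intros Hreg Hni Ha Hb.
  assert (Hab : meet a b <> bot) by (intros Hab; exact (Hb (dense_meet_eq_bot Ha Hab))).
  destruct (regular_well_inside_neq_bot Hreg Hab) as [y [Hy Hy0]].
  destruct (no_isolated_points_splittable Hreg Hni Hy0)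
    as [c [d [Hc [Hcy [Hd [Hdy Hcd]]]]]].
  assert (Hyb : le y b) by (eapply le_trans; [apply well_inside_le, Hy | apply meet_lb2]).
  assert (Hdense : forall e, le e y -> join a (pcompl e) = top).
  { intros e He. rewrite join_comm. exact (well_inside_mono He Hy (meet_lb1 _ a b)). }
  exists c, d. repeat split; try assumption.
  - eapply le_trans; eassumption.
  - eapply le_trans; eassumption.
  - apply Hdense, Hcy.
  - apply Hdense, Hdy.
Qed.
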